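(* Let $\mathbb N$ be a 2-connected symmetric directed graph on $m\ge2$ vertices without self-arcs, and suppose the matrices satisfy $C_{ij}=C_{ji}$ for every pair of arcs $(i,j),(j,i)$; write $\mathcal K_{\{i,j\}}=\ker C_{ij}=\ker C_{ji}$. Let $\mathrm D$ be a symmetric ear decomposition of $\mathbb N$. If for every symmetric ear $\mathbb E\in\mathrm D$ the family $\{\mathcal K_{\{i,j\}}:\{i,j\}\text{ a two-length cycle of }\mathbb E\}$ (indexed by the two-length cycles of $\mathbb E$) is independent, then $\bar{\mathbb N}$ is well-configured. Moreover, if $\max_{\mathbb E\in\mathrm D} l(\mathbb E)\le n$, then there exist matrices with $C_{ij}=C_{ji}$ and $\ker C_{ij}\neq 0$ for all arcs such that $\bar{\mathbb N}$ is well-configured.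
   Context: A directed graph is symmetric if whenever $(i,j)$ is an arc so is $(j,i)$; a two-length cycle is such a pair of arcs $\{(i,j),(j,i)\}$. A symmetric directed graph is $k$-connected if after removing any $k-1$ two-length cycles (both arcs of each) the resulting graph is still strongly connected. Setup: $m$ agents with states $x_i\in\mathbb R^n$; each arc $(j,i)$ carries a real matrix $C_{ji}$ with $n$ columns; $\bar{\mathbb N}$ is well-configured if for all $x_1,\dots,x_m\in\mathbb R^n$, $C_{ji}x_i=C_{ji}x_j$ for every arc $(j,i)$ implies $x_1=\cdots=x_m$. A finite indexed family of subspaces $\{\mathcal S_1,\dots,\mathcal S_p\}$ is independent if $\mathcal S_i\cap\sum_{j\ne i}\mathcal S_j=0$ for every $i$. A symmetric directed path has distinct vertices $v_0,\dots,v_k$ ($k\ge1$) and exactly the arcs $(v_{r-1},v_r),(v_r,v_{r-1})$, $r=1,\dots,k$; its end-vertices are $v_0,v_k$. A symmetric directed cycle has distinct vertices $v_1,\dots,v_k$ ($k\ge3$) and exactly the arcs $(v_r,v_{r+1}),(v_{r+1},v_r)$ for $r=1,\dots,k$ (indices mod $k$). A symmetric ear decomposition of a symmetric directed graph $\mathbb G$ is a sequence $\mathbb E_0,\dots,\mathbb E_p$ of subgraphs where $\mathbb E_0$ is a symmetric directed cycle, each $\mathbb E_i$ ($i\ge1$) is a symmetric directed path or symmetric directed cycle, the $\mathbb E_i$ are pairwise arc-disjoint with union $\mathbb G$, and for $i\ge1$: a symmetric cycle $\mathbb E_i$ has exactly one vertex in common with $\bigcup_{k<i}\mathbb E_k$,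 and a symmetric path $\mathbb E_i$ has its two end-vertices as the only vertices in common with $\bigcup_{k<i}\mathbb E_k$. The length $l(\mathbb E)$ of a symmetric ear is its number of two-length cycles. *)

From HB Require Import structures.
From mathcomp Require Import all_boot all_order all_algebra.
Set Implicit Arguments. Unset Strict Implicit. Unset Printing Implicit Defensive.
Import Order.TTheory GRing.Theory Num.Theory.

Section Graphs.
Variable m : nat.
Local Notation V := 'I_m.

Definition sym_graph (e : rel V) : Prop := forall i j, e i j = e j i.
Definition no_self_arcs (e : rel V) : Prop := forall i, ~~ e i i.
Definition strongly_connected (e : rel V) : Prop := forall i j, connect e i j.

Definition remove_tlc (e : rel V) (a b : V) : rel V :=
  fun i j => e i j && ~~ (((i == a) && (j == b)) || ((i == b) && (j == a))).

Definition two_connected (e : rel V) : Prop :=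
  forall a b, e a b -> strongly_connected (remove_tlc e a b).

(* A symmetric ear: a symmetric directed path with vertex list [v0; ...; vk],
   or a symmetric directed cycle with vertex list [v1; ...; vk]. *)
Inductive sym_ear := SPath of seq V | SCycle of seq V.

Definition ear_verts (E : sym_ear) : seq V :=
  match E with SPath s => s | SCycle s => s end.

Definition ear_tlcs (E : sym_ear) : seq (V * V) :=
  match E with
  | SPath s => zip s (behead s)
  | SCycle s => match s with [::] => [::] | v :: t => zip s (rcons t v) end
  end.

Definition ear_length (E : sym_ear) : nat := size (ear_tlcs E).

Definition ear_wf (E : sym_ear) : bool :=
  match E with
  | SPath s => uniq s && (2 <= size s)
  | SCycle s => uniq s && (3 <= size s)
  end.

Definition ear_arc (E : sym_ear) (i j : V) : bool :=
  ((i, j) \in ear_tlcs E) || ((j, i) \in ear_tlcs E).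

Definition ear0 : sym_ear := SPath [::].

Definition attach_ok (prev : seq V) (E : sym_ear) : Prop :=
  match E with
  | SPath s => match s with
               | [::] => False
               | v0 :: w => forall v, v \in s ->
                    (v \in prev) = ((v == v0) || (v == last v0 w))
               end
  | SCycle s => count (fun v => v \in prev) s = 1%N
  end.

Definition sym_ear_decomposition (e : rel V) (D : seq sym_ear) : Prop :=
  [/\ (match D with SCycle _ :: _ => True | _ => False end) /\ all ear_wf D,
      (forall t1 t2, (t1 < size D)%N -> (t2 < size D)%N -> t1 != t2 ->
         forall i j, ear_arc (nth ear0 D t1) i j -> ~~ ear_arc (nth ear0 D t2) i j),
      (forall i j, e i j <-> (exists2 t, (t < size D)%N & ear_arc (nth ear0 D t) i j)),
      (forall v : V, (exists2 t, (t < size D)%N & v \in ear_verts (nth ear0 D t)))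
    & (forall t, (0 < t < size D)%N ->
         attach_ok (flatten (map ear_verts (take t D))) (nth ear0 D t))].

End Graphs.

Arguments SPath {m}.
Arguments SCycle {m}.
Arguments ear0 {m}.

Local Open Scope ring_scope.

Section Matrices.
Variables (R : fieldType) (m n : nat).
Local Notation V := 'I_m.
Variables (r : V -> V -> nat) (C : forall i j : V, 'M[R]_(r i j, n)).

Definition sym_weights (e : rel V) : Prop :=
  forall i j, e i j -> exists H : r i j = r j i, castmx (H, erefl n) (C i j) = C j i.

Definition well_configured (e : rel V) : Prop :=
  forall x : V -> 'cV[R]_n,
    (forall i j, e j i -> C j i *m x i = C j i *m x j) ->
    forall i j, x i = x j.

(* ker C (as a subspace of column vectors, represented in MathComp's row
   convention: the row space of kermx C^T is {x | C x = 0} transposed) *)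
Definition kerC (i j : V) : 'M[R]_n := kermx (C i j)^T.

End Matrices.

Definition independent_family (R : fieldType) (n k : nat) (K : 'I_k -> 'M[R]_n) : Prop :=
  forall i : 'I_k, (K i :&: \sum_(j | j != i) K j)%MS = 0.

Definition ear_kernels_independent (R : fieldType) (m n : nat)
    (r : 'I_m -> 'I_m -> nat) (C : forall i j, 'M[R]_(r i j, n)) (E : sym_ear m) : Prop :=
  independent_family
    (fun k : 'I_(size (ear_tlcs E)) =>
       let p := tnth (in_tuple (ear_tlcs E)) k in kerC C p.1 p.2).

(* Consensus spreads along the ear decomposition.  Suppose x already agrees at
   the ends of an ear (its two end-vertices, or the base vertex of a cycle).  The
   differences x_(v_r) - x_(v_(r-1)) along its two-length cycles lie in the
   corresponding kernels and telescope to zero, so independence of the kernels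
   kills each of them and x is constant on the whole ear.
   Conversely, label each two-length cycle by its position k in its ear and take
   C_ij = I - E_kk, whose kernel is the k-th coordinate axis: these kernels are
   nonzero, and kernels with distinct labels are independent; l(E) <= n is what
   makes the labels fit into n coordinates. *)

From HB Require Import structures.
From mathcomp Require Import all_boot all_order all_algebra.
Set Implicit Arguments. Unset Strict Implicit. Unset Printing Implicit Defensive.
Import Order.TTheory GRing.Theory Num.Theory.
Local Open Scope ring_scope.

Lemma independent_sum_eq0 (R : fieldType) (n k : nat) (K : 'I_k -> 'M[R]_n)
    (u : 'I_k -> 'rV[R]_n) :
  independent_family K -> (forall i, (u i <= K i)%MS) -> \sum_i u i = 0 ->
  forall i, u i = 0.
Proof.
move=> indK uK sum_u0 i.
have ui_sum : u i = - \sum_(j | j != i) u j.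
  by apply/eqP; rewrite -addr_eq0; move: sum_u0; rewrite (bigD1 i) //= => ->.
apply/eqP; rewrite -submx0 -(indK i) sub_capmx uK ui_sum eqmx_opp.
exact: summx_sub_sums.
Qed.

Lemma mem_zip (S T : eqType) (s : seq S) (t : seq T) p :
  p \in zip s t -> (p.1 \in s) && (p.2 \in t).
Proof.
elim: s t => [|a s IH] [|b t] //= /predU1P[-> | /IH /andP[s_p t_p]].
  by rewrite !mem_head.
by rewrite !inE s_p t_p !orbT.
Qed.

Lemma zip_cons_rcons (T : Type) (v : T) (t : seq T) (u : T) :
  zip (v :: t) (rcons t u) = zip (v :: rcons t u) (rcons t u).
Proof. by elim: t v => [|a t IH] v //=; rewrite IH. Qed.

Section Walks.
Variable T : eqType.

Lemma telescope_walk (M : zmodType) (x : T -> M) v s :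
  \sum_(q <- zip (v :: s) s) (x q.2 - x q.1) = x (last v s) - x v.
Proof.
elim: s v => [|a s IH] v /=; first by rewrite big_nil subrr.
by rewrite big_cons IH /= addrC addrA subrK.
Qed.

Lemma walk_const (U : Type) (x : T -> U) v s :
  (forall q, q \in zip (v :: s) s -> x q.1 = x q.2) ->
  {in v :: s, forall u, x u = x v}.
Proof.
elim: s v => [|a s IH] v step u /=; first by rewrite inE => /eqP ->.
have xva : x v = x a by apply: (step (v, a)); rewrite mem_head.
rewrite inE => /predU1P[-> // | u_s]; rewrite xva; apply: IH u_s => q q_s.
by apply: step; rewrite inE q_s orbT.
Qed.

End Walks.

Section UnorderedPairs.
Variable T : finType.

Definition upair (q : T * T) : {set T} := [set q.1; q.2].

Lemma upairC a b : upair (a, b) = upair (b, a).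
Proof. exact: setUC. Qed.

Lemma upair_notin_walk a b s :
  a \notin s -> upair (a, b) \notin map upair (zip s (behead s)).
Proof.
move=> a_s; apply/mapP => -[q /mem_zip /andP[q1_s q2_s]].
move/setP/(_ a); rewrite !inE eqxx /= => /esym /orP[] /eqP a_q.
  by rewrite a_q q1_s in a_s.
by rewrite a_q (mem_behead q2_s) in a_s.
Qed.

Lemma uniq_walk_upairs s : uniq s -> uniq (map upair (zip s (behead s))).
Proof.
elim: s => [|a [|b s] IH] //= /andP[a_bs uniq_bs].
by rewrite upair_notin_walk // IH.
Qed.

Lemma uniq_cycle_upairs v t : uniq (v :: t) -> (2 <= size t)%N ->
  uniq (map upair (zip (v :: t) (rcons t v))).
Proof.
case: t => [|a [|b t]] // uniq_vt _.
rewrite /= !inE !negb_or in uniq_vt.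
case/and3P: uniq_vt => /and3P[va vb vt] /andP[ab a_t] bt.
set w := a :: rcons (b :: t) v.
have -> : zip [:: v, a, b & t] (rcons [:: a, b & t] v) = (v, a) :: zip w (behead w).
  by rewrite /= zip_cons_rcons.
have uniq_w : uniq w.
  rewrite /w cons_uniq rcons_uniq !mem_rcons !inE !negb_or (eq_sym a) va ab a_t.
  by rewrite vb vt.
rewrite map_cons cons_uniq uniq_walk_upairs // andbT /w /= inE negb_or.
rewrite upairC upair_notin_walk ?andbT; last first.
  by rewrite in_cons mem_rcons in_cons !negb_or ab (eq_sym a) va a_t.
apply/eqP => /setP/(_ v); rewrite !inE eqxx orbT /= => /esym.
by rewrite (negbTE va) (negbTE vb).
Qed.

End UnorderedPairs.

Section Ears.
Variable m : nat.
Implicit Type E : sym_ear m.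

Definition ear_walk E : seq 'I_m :=
  match E with
  | SPath s => s
  | SCycle [::] => [::]
  | SCycle (v :: t) => v :: rcons t v
  end.

Lemma ear_tlcs_walk E : ear_tlcs E = zip (ear_walk E) (behead (ear_walk E)).
Proof. by case: E => [s | [|v t]] //=; rewrite zip_cons_rcons. Qed.

Lemma mem_ear_walk E : ear_walk E =i ear_verts E.
Proof.
case: E => [s | [|v t]] //= u.
by rewrite !inE mem_rcons inE orbA orbb.
Qed.

Lemma uniq_ear_upairs E : ear_wf E -> uniq (map (@upair _) (ear_tlcs E)).
Proof.
case: E => [s | [|v t]] //= /andP[uniq_s size_s].
  exact: uniq_walk_upairs.
exact: uniq_cycle_upairs.
Qed.

End Ears.

Section Consensus.
Variables (R : fieldType) (m n : nat) (r : 'I_m -> 'I_m -> nat).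
Variables (C : forall i j : 'I_m, 'M[R]_(r i j, n)) (x : 'I_m -> 'cV[R]_n).

Definition agrees_on_ear (E : sym_ear m) : Prop :=
  forall q, q \in ear_tlcs E -> C q.1 q.2 *m (x q.2 - x q.1) = 0.

Lemma independent_kernels_sum_eq0 (s : seq ('I_m * 'I_m)) (u : 'I_m * 'I_m -> 'cV[R]_n) :
  independent_family
    (fun k : 'I_(size s) => let p := tnth (in_tuple s) k in kerC C p.1 p.2) ->
  (forall q, q \in s -> C q.1 q.2 *m u q = 0) -> \sum_(q <- s) u q = 0 ->
  {in s, forall q, u q = 0}.
Proof.
move=> indK u_ker sum_u0 q q_s; have /tnthP[k ->] : q \in in_tuple s by [].
apply: trmx_inj; rewrite trmx0.
apply: (@independent_sum_eq0 _ _ _ _ (fun k => (u (tnth (in_tuple s) k))^T) indK).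
  by move=> l; rewrite /kerC sub_kermx -trmx_mul u_ker ?trmx0 ?mem_tnth.
by rewrite -raddf_sum -(big_tnth _ _ s xpredT u) sum_u0 raddf0.
Qed.

Lemma ear_consensus (E : sym_ear m) (v : 'I_m) (w : seq 'I_m) :
  ear_walk E = v :: w -> ear_kernels_independent C E -> agrees_on_ear E ->
  x (last v w) = x v -> {in ear_verts E, forall u, x u = x v}.
Proof.
move=> walkE indE agreeE ends u; rewrite -mem_ear_walk walkE.
have tlcsE : ear_tlcs E = zip (v :: w) w by rewrite ear_tlcs_walk walkE.
apply: walk_const u => q q_tlc; apply/eqP; rewrite eq_sym -subr_eq0; apply/eqP.
rewrite -tlcsE in q_tlc; apply: (independent_kernels_sum_eq0 indE agreeE) q_tlc.
by rewrite tlcsE telescope_walk ends subrr.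
Qed.

Lemma cycle_consensus (v : 'I_m) (t : seq 'I_m) :
  ear_kernels_independent C (SCycle (v :: t)) -> agrees_on_ear (SCycle (v :: t)) ->
  {in v :: t, forall u, x u = x v}.
Proof.
move=> indE agreeE.
by apply: (ear_consensus (E := SCycle (v :: t)) (w := rcons t v)); rewrite ?last_rcons.
Qed.

Lemma consensus_attach (prev : seq 'I_m) (E : sym_ear m) :
  attach_ok prev E -> ear_kernels_independent C E -> agrees_on_ear E ->
  {in prev &, forall u v, x u = x v} -> {in prev ++ ear_verts E &, forall u v, x u = x v}.
Proof.
move=> attE indE agreeE cons_prev.
suff [w0 w0_prev xE] : exists2 w0, w0 \in prev & {in ear_verts E, forall u, x u = x w0}.
  have x_w0 u : u \in prev ++ ear_verts E -> x u = x w0.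
    by rewrite mem_cat => /orP[u_prev | /xE //]; exact: cons_prev.
  by move=> u v /x_w0 -> /x_w0 ->.
case: E attE indE agreeE => [[|v w] | [|v t]] // attE indE agreeE.
  have v_prev : v \in prev by rewrite attE ?mem_head ?eqxx.
  have last_prev : last v w \in prev by rewrite attE ?mem_last ?eqxx ?orbT.
  by exists v => //; apply: (ear_consensus (E := SPath (v :: w))) => //; apply: cons_prev.
have /hasP[w0 w0_vt w0_prev] : has (fun u => u \in prev) (v :: t).
  by rewrite has_count attE.
exists w0 => // u u_vt.
by rewrite (cycle_consensus indE agreeE u_vt) (cycle_consensus indE agreeE w0_vt).
Qed.

End Consensus.

Lemma well_configured_of_independent_ears (R : fieldType) (m n : nat) (e : rel 'I_m)
    (D : seq (sym_ear m)) (r : 'I_m -> 'I_m -> nat) (C : forall i j : 'I_m, 'M[R]_(r i j, n)) :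
  sym_ear_decomposition e D ->
  (forall t, (t < size D)%N -> ear_kernels_independent C (nth ear0 D t)) ->
  well_configured C e.
Proof.
case=> [[D_head D_wf] _ D_arcs D_cover D_attach] indD x x_arcs.
have agreeD t : (t < size D)%N -> agrees_on_ear C x (nth ear0 D t).
  move=> t_lt q q_tlc; rewrite mulmxBr x_arcs ?subrr //.
  by apply/D_arcs; exists t; rewrite // /ear_arc -surjective_pairing q_tlc.
have [v [s D0]] : exists v s, nth ear0 D 0 = SCycle (v :: s).
  by case: (D) D_head D_wf => [|[//|[|v s] D']] //= _ _; exists v, s.
have consensus_prefix t : (t < size D)%N ->
    {in flatten (map (@ear_verts m) (take t.+1 D)) &, forall u w, x u = x w}.
  elim: t => [|t IH] t_lt; rewrite (take_nth ear0 t_lt) map_rcons flatten_rcons.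
    have ind0 := indD 0 t_lt; have agree0 := agreeD 0 t_lt; rewrite D0 in ind0 agree0.
    rewrite take0 D0 => u w u_in w_in /=.
    by rewrite (cycle_consensus ind0 agree0 u_in) (cycle_consensus ind0 agree0 w_in).
  apply: consensus_attach; [exact: D_attach | exact: indD | exact: agreeD | ].
  exact: IH (ltnW t_lt).
have covered u : u \in flatten (map (@ear_verts m) D).
  have [t t_lt u_in] := D_cover u; apply/flattenP.
  by exists (ear_verts (nth ear0 D t)); rewrite // -(nth_map ear0 [::]) // mem_nth ?size_map.
move=> i j; have [t t_lt _] := D_cover i.
have := consensus_prefix (size D).-1; rewrite prednK ?take_size; last exact: leq_ltn_trans t_lt.
by move/(_ (leqnn _)); apply; apply: covered.
Qed.

Section CoordinateKernels.
Variables (R : fieldType) (n : nat).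

Definition coord_compl (a : 'I_n) : 'M[R]_n := 1%:M - delta_mx a a.

Lemma trmx_coord_compl a : (coord_compl a)^T = coord_compl a.
Proof. by rewrite /coord_compl linearB /= trmx1 trmx_delta. Qed.

Lemma kermx_coord_compl_delta a :
  kermx (coord_compl a) *m delta_mx a a = kermx (coord_compl a).
Proof.
apply/eqP; rewrite eq_sym -subr_eq0 -{1}[kermx _]mulmx1 -mulmxBr.
exact/eqP/mulmx_ker.
Qed.

Lemma kermx_coord_compl_neq0 a : kermx (coord_compl a) != 0.
Proof.
have e_a : ((delta_mx 0 a : 'rV[R]_n) <= kermx (coord_compl a))%MS.
  by apply/sub_kermxP; rewrite mulmxBr mulmx1 mul_delta_mx subrr.
apply: contraTneq e_a => ->; rewrite submx0.
by apply/eqP => /matrixP/(_ 0 a); rewrite !mxE !eqxx => /eqP; rewrite oner_eq0.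
Qed.

Lemma independent_coord_kernels k (K : 'I_k -> 'M[R]_n) (g : 'I_k -> 'I_n) :
  injective g -> (forall i, K i = kermx (coord_compl (g i))) -> independent_family K.
Proof.
move=> g_inj defK i; set A := (K i :&: _)%MS.
have A_compl : A *m coord_compl (g i) = 0.
  by apply/sub_kermxP; rewrite -defK capmxSl.
have A_delta : A *m delta_mx (g i) (g i) = 0.
  apply/sub_kermxP; apply: submx_trans (capmxSr _ _) _.
  apply/sumsmx_subP => j ji; apply/sub_kermxP.
  rewrite defK -kermx_coord_compl_delta -mulmxA mul_delta_mx_0 ?mulmx0 //.
  by apply: contra ji => /eqP/g_inj ->.
by rewrite -[A]mulmx1 -[1%:M](subrK (delta_mx (g i) (g i))) mulmxDr A_compl A_delta addr0.
Qed.

End CoordinateKernels.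

Lemma ear_length_gt0 m (E : sym_ear m) : ear_wf E -> (0 < ear_length E)%N.
Proof.
rewrite /ear_length; case: E => [[|a [|b s]] | [|v t]] //= _.
by rewrite size_zip size_rcons minnn.
Qed.

Lemma ear_length_le_max m (D : seq (sym_ear m)) t :
  (t < size D)%N -> (ear_length (nth ear0 D t) <= \max_(E <- D) ear_length E)%N.
Proof.
elim: D t => [|E D IH] [|t] //= t_lt; rewrite big_cons; first exact: leq_maxl.
exact: leq_trans (IH t t_lt) (leq_maxr _ _).
Qed.

Section EarLabels.
Variables (m : nat) (e : rel 'I_m) (D : seq (sym_ear m)).
Hypothesis decD : sym_ear_decomposition e D.

Definition ear_of (i j : 'I_m) : sym_ear m := nth ear0 D (find (fun E => ear_arc E i j) D).

(* Position of {i, j} among the two-length cycles of the ear containing it;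
   an arbitrary value when (i, j) is not an arc. *)
Definition tlc_label (i j : 'I_m) : nat :=
  index (upair (i, j)) (map (@upair _) (ear_tlcs (ear_of i j))).

Lemma tlc_labelC i j : tlc_label i j = tlc_label j i.
Proof.
rewrite /tlc_label /ear_of upairC.
by rewrite (eq_find (a2 := fun E => ear_arc E j i)) // => E; exact: orbC.
Qed.

Lemma find_ear_arc t i j :
  (t < size D)%N -> ear_arc (nth ear0 D t) i j -> find (fun E => ear_arc E i j) D = t.
Proof.
case: decD => _ D_disjoint _ _ _ t_lt ij_t.
have has_ij : has (fun E => ear_arc E i j) D by apply/(has_nthP ear0); exists t.
have find_lt : (find (fun E => ear_arc E i j) D < size D)%N by rewrite -has_find.
have [find_t | t_find | //] := ltngtP (find (fun E => ear_arc E i j) D) t.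
  have := D_disjoint _ _ find_lt t_lt (negbT (ltn_eqF find_t)) i j (nth_find ear0 has_ij).
  by rewrite ij_t.
by rewrite (before_find ear0 t_find) in ij_t.
Qed.

Lemma tlc_label_nth t k (q0 : 'I_m * 'I_m) :
  (t < size D)%N -> (k < ear_length (nth ear0 D t))%N ->
  tlc_label (nth q0 (ear_tlcs (nth ear0 D t)) k).1 (nth q0 (ear_tlcs (nth ear0 D t)) k).2 = k.
Proof.
case: (decD) => [[_ D_wf] _ _ _ _] t_lt k_lt.
set tl := ear_tlcs _; set q := nth q0 tl k.
have q_tl : q \in tl by exact: mem_nth.
rewrite /tlc_label /ear_of (@find_ear_arc t) //; last first.
  by rewrite /ear_arc -surjective_pairing q_tl.
rewrite -surjective_pairing -/tl /q -(nth_map q0 (upair q0)) // index_uniq ?size_map //.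
exact/uniq_ear_upairs/(all_nthP ear0 D_wf).
Qed.

End EarLabels.

Lemma exists_well_configured_weights (R : fieldType) (m n : nat) (e : rel 'I_m)
    (D : seq (sym_ear m)) :
  sym_ear_decomposition e D -> (\max_(E <- D) ear_length E <= n)%N ->
  exists (r : 'I_m -> 'I_m -> nat) (C : forall i j : 'I_m, 'M[R]_(r i j, n)),
    [/\ sym_weights C e, (forall i j, e i j -> kerC C i j != 0) & well_configured C e].
Proof.
move=> decD maxD; have [[D_head D_wf] _ _ _ _] := decD.
have D_gt0 : (0 < size D)%N by case: (D) D_head.
have length_le t : (t < size D)%N -> (ear_length (nth ear0 D t) <= n)%N.
  by move=> t_lt; exact: leq_trans (ear_length_le_max t_lt) maxD.
have n_gt0 : (0 < n)%N.
  exact: leq_trans (ear_length_gt0 (all_nthP ear0 D_wf 0 D_gt0)) (length_le 0 D_gt0).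
case: n n_gt0 maxD length_le => [//|n] _ _ length_le.
pose label i j : 'I_n.+1 := inord (tlc_label D i j).
exists (fun _ _ => n.+1), (fun i j => coord_compl R (label i j)); split.
- by move=> i j _; exists erefl; rewrite castmx_id /label tlc_labelC.
- by move=> i j _; rewrite /kerC trmx_coord_compl kermx_coord_compl_neq0.
apply: (well_configured_of_independent_ears decD) => t t_lt.
pose tl := ear_tlcs (nth ear0 D t).
pose g (k : 'I_(size tl)) := label (tnth (in_tuple tl) k).1 (tnth (in_tuple tl) k).2.
have g_val k : g k = k :> nat.
  rewrite /g /label (tnth_nth (tnth (in_tuple tl) k)) (tlc_label_nth decD) // inordK //.
  exact: leq_trans (ltn_ord k) (length_le t t_lt).
apply: (independent_coord_kernels (g := g)) => [k1 k2 /(congr1 (@nat_of_ord _)) | k].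
  by rewrite !g_val => /val_inj.
by rewrite /kerC trmx_coord_compl.
Qed.

Theorem theorem3 (R : realFieldType) (m n : nat) (e : rel 'I_m) (D : seq (sym_ear m)) :
  (2 <= m)%N -> sym_graph e -> no_self_arcs e -> two_connected e ->
  sym_ear_decomposition e D ->
  (forall (r : 'I_m -> 'I_m -> nat) (C : forall i j : 'I_m, 'M[R]_(r i j, n)),
      sym_weights C e ->
      (forall t, (t < size D)%N -> ear_kernels_independent C (nth ear0 D t)) ->
      well_configured C e)
  /\
  ((\max_(E <- D) ear_length E <= n)%N ->
   exists (r : 'I_m -> 'I_m -> nat) (C : forall i j : 'I_m, 'M[R]_(r i j, n)),
     [/\ sym_weights C e,
         (forall i j, e i j -> kerC C i j != 0)
       & well_configured C e]).
Proof.
move=> _ _ _ _ decD; split.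
  by move=> r C _; exact: well_configured_of_independent_ears decD.
exact: exists_well_configured_weights decD.
Qed.
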